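(* Let $n\in\mathbb{N}$ and $a\in\mathbb{R}$ with $|a|\ge2$. Let $G_n(a,1)$ be the $(n+2)\times n$ matrix whose $(i,j)$ entry is $1$ if $i=j$, $a$ if $i=j+1$, $1$ if $i=j+2$, and $0$ otherwise. For $1\le i<j\le n+2$, let $G_n(a,1)^{i,j}$ be the $n\times n$ matrix obtained by deleting the $i$-th and $j$-th rows of $G_n(a,1)$. Then $G_n(a,1)^{i,j}$ is invertible; that is, all order-$n$ minors of $G_n(a,1)$ are nonzero. *)

From mathcomp Require Import all_boot all_order all_algebra.
From mathcomp Require Import reals.
Set Implicit Arguments. Unset Strict Implicit. Unset Printing Implicit Defensive.
Import Order.TTheory GRing.Theory Num.Theory.
Local Open Scope ring_scope.

Definition Gmat (R : nzRingType) (n : nat) (a : R) : 'M[R]_(n.+2, n) :=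
  \matrix_(r < n.+2, c < n)
    (if (r == c :> nat) then 1
     else if (r == c.+1 :> nat) then a
     else if (r == c.+2 :> nat) then 1 else 0).

(* Increasing enumeration of the rows of 'I_(n.+2) other than i and j
   (for i < j): the k-th remaining row. *)
Definition skip2 (n : nat) (i j : 'I_n.+2) (k : 'I_n) : 'I_n.+2 :=
  @inord n.+1 (if (k < i)%N then (k : nat) else if (k.+1 < j)%N then k.+1 else k.+2).

Definition del2rows (R : nzRingType) (n : nat) (i j : 'I_n.+2)
  (M : 'M[R]_(n.+2, n)) : 'M[R]_n := rowsub (skip2 i j) M.

From mathcomp Require Import all_boot all_order all_algebra zify lra.
From mathcomp Require Import reals.
Import Order.TTheory GRing.Theory Num.Theory.
Set Implicit Arguments. Unset Strict Implicit. Unset Printing Implicit Defensive.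
Local Open Scope ring_scope.

(* A vector x with G^{i,j} x = 0, padded with two zeros on either side, is a
   sequence y with y_r + a y_{r+1} + y_{r+2} = 0 at every row r other than i
   and j. The two zeros at each end force y to vanish up to i+1 and from j+1
   on. In between, y starts from y_{i+1} = 0 and, as |a| >= 2,
   |y_{m+2}| >= |a| |y_{m+1}| - |y_m| >= |y_{m+1}|; so |y| is nondecreasing
   there and y_{j+1} = 0 makes it vanish too. *)

Definition recurrent_at (R : pzRingType) (a : R) (y : nat -> R) (r : nat) : Prop :=
  y r + a * y r.+1 + y r.+2 = 0.

Lemma recurrent_vanish (R : pzRingType) (a : R) (z : nat -> R) (N : nat) :
  z 0%N = 0 -> z 1%N = 0 -> (forall m, (m < N)%N -> recurrent_at a z m) ->
  forall m, (m <= N.+1)%N -> z m = 0.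
Proof.
move=> z0 z1 rec.
suff zz m : (m <= N)%N -> z m = 0 /\ z m.+1 = 0.
  by case=> [|m] hm; [exact: (zz 0%N _).1 | exact: (zz m hm).2].
elim: m => [//|m IH] hm; have [zm zm1] := IH (ltnW hm); split=> //.
by have := rec m hm; rewrite /recurrent_at zm zm1 mulr0 !add0r.
Qed.

Lemma recurrent_at_rev (R : pzRingType) (a : R) (y : nat -> R) (K m : nat) :
  (m.+2 <= K)%N ->
  recurrent_at a (fun k => y (K - k)%N) m <-> recurrent_at a y (K - m.+2).
Proof.
move=> hm; rewrite /recurrent_at.
have -> : (K - m.+1 = (K - m.+2).+1)%N by lia.
have -> : (K - m = (K - m.+2).+2)%N by lia.
by rewrite addrC [y _ + _]addrC addrA.
Qed.

Lemma recurrent_norm_le (R : realDomainType) (a : R) (z : nat -> R) (N : nat) :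
  2 <= `|a| -> z 0%N = 0 -> (forall m, (m < N)%N -> recurrent_at a z m) ->
  forall m, (m <= N)%N -> `|z m| <= `|z m.+1|.
Proof.
move=> ha z0 rec; elim=> [_|m IH hm]; first by rewrite z0 normr0.
have zSS : a * z m.+1 + z m = - z m.+2.
  by apply/eqP; rewrite -addr_eq0 [a * _ + _]addrC; apply/eqP/rec.
have := lerB_normD (a * z m.+1) (z m); rewrite zSS normrN normrM.
have : 2 * `|z m.+1| <= `|a| * `|z m.+1| by apply: ler_wpM2r.
have := IH (ltnW hm); lra.
Qed.

Lemma recurrent_vanish_ends (R : realDomainType) (a : R) (z : nat -> R) (N : nat) :
  2 <= `|a| -> z 0%N = 0 -> z N.+1 = 0 ->
  (forall m, (m < N)%N -> recurrent_at a z m) ->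
  forall m, (m <= N.+1)%N -> z m = 0.
Proof.
move=> ha z0 zN rec.
suff le_last d : (d <= N.+1)%N -> `|z (N.+1 - d)%N| <= `|z N.+1|.
  move=> m hm; apply/eqP; rewrite -normr_le0.
  by have := le_last (N.+1 - m)%N; rewrite subKn // zN normr0; apply; rewrite leq_subr.
elim: d => [|d IH] hd; first by rewrite subn0.
apply: le_trans _ (IH (ltnW hd)).
have -> : (N.+1 - d = (N.+1 - d.+1).+1)%N by lia.
by apply: (recurrent_norm_le ha z0 rec); lia.
Qed.

Lemma recurrent_except2_vanish (R : realDomainType) (a : R) (n i j : nat) (y : nat -> R) :
  2 <= `|a| -> (i < j)%N -> (j < n.+2)%N ->
  y 0%N = 0 -> y 1%N = 0 -> y n.+2 = 0 -> y n.+3 = 0 ->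
  (forall r, (r < n.+2)%N -> r != i -> r != j -> recurrent_at a y r) ->
  forall k, (k <= n.+3)%N -> y k = 0.
Proof.
move=> ha lt_ij lt_jn y0 y1 yn2 yn3 rec.
have head k : (k <= i.+1)%N -> y k = 0.
  by apply: recurrent_vanish => // m hm; apply: rec; lia.
have tail k : (j.+1 <= k <= n.+3)%N -> y k = 0.
  move=> hk; have -> : k = (n.+3 - (n.+3 - k))%N by lia.
  apply: (@recurrent_vanish _ a (fun m => y (n.+3 - m)%N) (n.+1 - j)); last lia.
  - by rewrite subn0.
  - by rewrite subn1.
  - by move=> m hm; apply/recurrent_at_rev; [lia | apply: rec; lia].
have middle k : (i.+1 <= k <= j.+1)%N -> y k = 0.
  move=> hk; have -> : k = (i.+1 + (k - i.+1))%N by lia.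
  apply: (@recurrent_vanish_ends _ a (fun m => y (i.+1 + m)%N) (j - i).-1 ha); last lia.
  - by rewrite addn0 head.
  - by rewrite tail //; lia.
  - by move=> m hm; rewrite /recurrent_at !addnS; apply: rec; lia.
move=> k hk; case: (leqP k i.+1) => [|lt_ik]; first exact: head.
by case: (leqP k j.+1) => [le_kj|lt_jk]; [apply: middle | apply: tail]; lia.
Qed.

Definition pad2 (R : nmodType) (n : nat) (x : 'cV[R]_n) (k : nat) : R :=
  \sum_(c < n | k == c.+2) x c 0.

Lemma pad2_ord (R : nmodType) (n : nat) (x : 'cV[R]_n) (c : 'I_n) : pad2 x c.+2 = x c 0.
Proof. by rewrite /pad2 (eq_bigl (pred1 c)) ?big_pred1_eq // => c'; rewrite /= eqSS eq_sym. Qed.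

Lemma pad2_out (R : nmodType) (n : nat) (x : 'cV[R]_n) (k : nat) :
  (k < 2)%N || (n.+2 <= k)%N -> pad2 x k = 0.
Proof. by move=> hk; apply: big1 => c /eqP kc; move: hk; rewrite kc; have := ltn_ord c; lia. Qed.

Lemma Gmat_mulmxE (R : nzRingType) (n : nat) (a : R) (x : 'cV[R]_n) (r : 'I_n.+2) :
  (Gmat n a *m x) r 0 = pad2 x r + a * pad2 x r.+1 + pad2 x r.+2.
Proof.
rewrite mxE /pad2 mulr_sumr !(big_mkcond (fun c : 'I_n => _ == c.+2)) -!big_split.
apply: eq_bigr => c _; rewrite mxE !eqSS /=.
do 3 case: eqP => ? /=; try lia.
all: by rewrite ?mul1r ?mul0r ?add0r ?addr0.
Qed.

Lemma skip2_onto (n : nat) (i j : 'I_n.+2) (r : nat) :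
  (i < j)%N -> (r < n.+2)%N -> r != i -> r != j ->
  exists k : 'I_n, skip2 i j k = r :> nat.
Proof.
move=> lt_ij lt_rn /eqP ne_ri /eqP ne_rj.
have [k lt_kn skip_k] : exists2 k, (k < n)%N &
    (if (k < i)%N then k else if (k.+1 < j)%N then k.+1 else k.+2) = r.
  have lt_jn := ltn_ord j.
  case: (ltnP r i) => [lt_ri|le_ir]; first by exists r; rewrite ?lt_ri //; lia.
  case: (ltnP r j) => [lt_rj|le_jr].
    by exists r.-1; [lia | rewrite ifF ?ifT; lia].
  by exists r.-2; [lia | rewrite !ifF; lia].
by exists (Ordinal lt_kn); rewrite /skip2 /= skip_k inordK.
Qed.

Lemma inj_unitmx (F : fieldType) (n : nat) (A : 'M[F]_n) :
  (forall x : 'cV_n, A *m x = 0 -> x = 0) -> A \in unitmx.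
Proof.
move=> Ainj; rewrite -unitmx_tr -row_free_unit; apply: inj_row_free => v vA0.
have /Ainj vT0 : A *m v^T = 0 by rewrite -[A]trmxK -trmx_mul vA0 trmx0.
by rewrite -[v]trmxK vT0 trmx0.
Qed.

Theorem proposition4p4 (R : realType) (n : nat) (a : R) (ha : 2 <= `|a|)
  (i j : 'I_n.+2) (hij : (i < j)%N) :
  del2rows i j (Gmat n a) \in unitmx.
Proof.
apply: inj_unitmx => x Gx0.
have rec r : (r < n.+2)%N -> r != i -> r != j -> recurrent_at a (pad2 x) r.
  move=> lt_rn ne_ri ne_rj; have [k <-] := skip2_onto hij lt_rn ne_ri ne_rj.
  have := congr1 (fun M : 'cV_n => M k 0) Gx0.
  by rewrite /del2rows mul_rowsub_mx mxE Gmat_mulmxE mxE.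
have pad2_eq0 k : (k <= n.+3)%N -> pad2 x k = 0.
  by apply: (recurrent_except2_vanish ha hij (ltn_ord j)) => //; apply: pad2_out; lia.
by apply/colP => c; rewrite mxE -pad2_ord pad2_eq0 //; have := ltn_ord c; lia.
Qed.
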